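(* Let $k,t\geq 2$ be integers and let $n$ be an integer with $2t\leq n\leq 3t$. Then $A_k(n,0^t)\leq \beta_k(t)^n$, where $\beta_k(t)=k-(k-1)k^{-t-1}$.
   Context: Words are over $\Sigma_k=\{0,1,\ldots,k-1\}$, and $0^t$ is the word consisting of $t$ zeros. $A_k(m,v)$ denotes the number of words of length $m$ over $\Sigma_k$ that do not contain $v$ as a factor. *)

From mathcomp Require Import all_boot all_order all_algebra.
Set Implicit Arguments. Unset Strict Implicit. Unset Printing Implicit Defensive.
Import GRing.Theory Num.Theory.

Definition A (k m : nat) (v : seq 'I_k) : nat :=
  #|[set w : m.-tuple 'I_k | ~~ infix v w]|.

(* 0^t : the word of t zeros over Sigma_k (here k > 0 is encoded as k.-1.+1,
   which equals k whenever k >= 1). *)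
Definition zeros (k t : nat) : seq 'I_k.-1.+1 := nseq t ord0.

Definition beta (k t : nat) : rat :=
  (k%:R - (k%:R - 1) / (k%:R ^+ t.+1))%R.

From mathcomp Require Import all_boot all_order all_algebra.
From mathcomp Require Import zify ring.
Set Implicit Arguments. Unset Strict Implicit. Unset Printing Implicit Defensive.
Import Order.TTheory GRing.Theory Num.Theory.

(* Count by complement: A_k(n, 0^t) = k^n - #{words containing 0^t}.  For
   1 <= i <= n - t, let F_i be the set of words with 0^t at (0-based) positions
   i, ..., i+t-1, a nonzero letter at position i-1 and, if position t-1 lies
   outside the block, a nonzero letter there too.  When n <= 3t these sets
   are pairwise disjoint, and their sizes add up to at least
   n (k-1) k^(n-t-2).  On the other side, a^n - (a-c)^n <= n a^(n-1) c with
   a = k and c = (k-1) k^(-t-1) gives exactly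
   beta_k(t)^n >= k^n - n (k-1) k^(n-t-2). *)

Lemma card_tuple_family (T : finType) n (Q : 'I_n -> pred T) :
  #|[set w : n.-tuple T | [forall j, Q j (tnth w j)]]| = \prod_(j < n) #|Q j|.
Proof.
rewrite -(card_imset _ (can_inj (@finfun_of_tupleK T n))).
have -> : [set finfun_of_tuple w | w in [set w : n.-tuple T | [forall j, Q j (tnth w j)]]]
    = [set f : T ^ n | f \in family Q].
  apply/setP=> f; rewrite !inE; apply/imsetP/familyP.
    by case=> w; rewrite inE => /forallP Qw -> j; rewrite ffunE; apply: Qw.
  move=> Qf; exists (tuple_of_finfun f); last by rewrite tuple_of_finfunK.
  by rewrite inE; apply/forallP=> j; rewrite tnth_mktuple; apply: Qf.
by rewrite cardsE card_family foldrE big_map big_enum.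
Qed.

Lemma A_add_card_infix k m (v : seq 'I_k) :
  (A m v + #|[set w : m.-tuple 'I_k | infix v w]| = k ^ m)%N.
Proof.
rewrite /A; have -> : [set w : m.-tuple 'I_k | ~~ infix v w]
                      = ~: [set w : m.-tuple 'I_k | infix v w].
  by apply/setP => w; rewrite !inE.
by rewrite addnC cardsC card_tuple card_ord.
Qed.

Lemma prod_nat_seg_const (F : nat -> nat) a b c :
  (forall j, a <= j < b -> F j = c) -> \prod_(a <= j < b) F j = c ^ (b - a).
Proof. by move=> Fc; rewrite -prod_nat_const_nat; apply: eq_big_nat. Qed.

Section BlockWords.

Variables K t n : nat.

Definition block_constraint (i j : nat) : pred 'I_K.+1 := fun x =>
  if i <= j < i + t then x == ord0
  else if (j == i.-1) || (j == t.-1) then x != ord0 else true.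

Definition block_words (i : nat) : {set n.-tuple 'I_K.+1} :=
  [set w | [forall j : 'I_n, block_constraint i j (tnth w j)]].

Lemma card_block_constraint_block i j :
  i <= j < i + t -> #|block_constraint i j| = 1.
Proof.
move=> ij; rewrite -(card1 (@ord0 K)); apply: eq_card => x.
by rewrite /block_constraint ij inE.
Qed.

Lemma card_block_constraint_guard i j :
  ~~ (i <= j < i + t) -> (j == i.-1) || (j == t.-1) -> #|block_constraint i j| = K.
Proof.
move=> /negbTE ij guard; transitivity #|predC1 (@ord0 K)|; last first.
  by rewrite cardC1 card_ord.
by apply: eq_card => x; rewrite /block_constraint ij guard !inE.
Qed.

Lemma card_block_constraint_free i j :
  ~~ (i <= j < i + t) -> j != i.-1 -> j != t.-1 -> #|block_constraint i j| = K.+1.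
Proof.
move=> /negbTE ij /negbTE ji /negbTE jt; rewrite -[K.+1 in RHS]card_ord.
by apply: eq_card => x; rewrite /block_constraint ij ji jt.
Qed.

Lemma card_block_words i :
  #|block_words i| = \prod_(0 <= j < n) #|block_constraint i j|.
Proof.
rewrite /block_words (card_tuple_family (fun j : 'I_n => block_constraint i j)).
by rewrite big_mkord.
Qed.

Lemma card_block_words_early i :
  0 < i <= t -> i + t <= n -> #|block_words i| = K * K.+1 ^ (n - t - 1).
Proof.
move=> it itn; rewrite card_block_words.
rewrite (big_cat_nat _ (n := i.-1)) //; last lia.
rewrite (big_cat_nat _ (m := i.-1) (n := i)); [|lia|lia].
rewrite (big_cat_nat _ (m := i) (n := i + t)); [|lia|lia].
rewrite (@prod_nat_seg_const _ 0 i.-1 K.+1); last first.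
  by move=> j ?; apply: card_block_constraint_free; lia.
rewrite (@prod_nat_seg_const _ i.-1 i K); last first.
  by move=> j ?; apply: card_block_constraint_guard; lia.
rewrite (@prod_nat_seg_const _ i (i + t) 1); last first.
  by move=> j ?; apply: card_block_constraint_block; lia.
rewrite (@prod_nat_seg_const _ (i + t) n K.+1); last first.
  by move=> j ?; apply: card_block_constraint_free; lia.
rewrite /= exp1n mul1n (_ : i - i.-1 = 1); last lia.
rewrite (_ : n - t - 1 = i.-1 - 0 + (n - (i + t))); last lia.
rewrite expnD; ring.
Qed.

Lemma card_block_words_late i :
  0 < t < i -> i + t <= n -> #|block_words i| = K ^ 2 * K.+1 ^ (n - t - 2).
Proof.
move=> ti itn; rewrite card_block_words.
rewrite (big_cat_nat _ (n := t.-1)) //; last lia.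
rewrite (big_cat_nat _ (m := t.-1) (n := t)); [|lia|lia].
rewrite (big_cat_nat _ (m := t) (n := i.-1)); [|lia|lia].
rewrite (big_cat_nat _ (m := i.-1) (n := i)); [|lia|lia].
rewrite (big_cat_nat _ (m := i) (n := i + t)); [|lia|lia].
rewrite (@prod_nat_seg_const _ 0 t.-1 K.+1); last first.
  by move=> j ?; apply: card_block_constraint_free; lia.
rewrite (@prod_nat_seg_const _ t.-1 t K); last first.
  by move=> j ?; apply: card_block_constraint_guard; lia.
rewrite (@prod_nat_seg_const _ t i.-1 K.+1); last first.
  by move=> j ?; apply: card_block_constraint_free; lia.
rewrite (@prod_nat_seg_const _ i.-1 i K); last first.
  by move=> j ?; apply: card_block_constraint_guard; lia.
rewrite (@prod_nat_seg_const _ i (i + t) 1); last first.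
  by move=> j ?; apply: card_block_constraint_block; lia.
rewrite (@prod_nat_seg_const _ (i + t) n K.+1); last first.
  by move=> j ?; apply: card_block_constraint_free; lia.
rewrite /= exp1n mul1n (_ : t - t.-1 = 1); last lia.
rewrite (_ : i - i.-1 = 1); last lia.
rewrite (_ : n - t - 2 = t.-1 - 0 + (i.-1 - t) + (n - (i + t))); last lia.
rewrite !expnD; ring.
Qed.

Lemma block_words_nth i w p :
  p < n -> w \in block_words i -> block_constraint i p (nth ord0 w p).
Proof.
by move=> pn; rewrite inE => /forallP /(_ (Ordinal pn)); rewrite (tnth_nth ord0).
Qed.

Lemma block_words_infix i w :
  i + t <= n -> w \in block_words i -> infix (nseq t ord0) w.
Proof.
move=> itn wi; apply/infixP; exists (take i w), (drop (i + t) w).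
have block_zero : take t (drop i w) = nseq t ord0.
  have size_block : size (take t (drop i w)) = t.
    by rewrite size_takel // size_drop size_tuple; lia.
  apply: (@eq_from_nth _ ord0) => [|j]; first by rewrite size_block size_nseq.
  rewrite size_block => jt.
  rewrite nth_take // nth_drop nth_nseq jt.
  have := block_words_nth (p := i + j) _ wi; rewrite /block_constraint ifT; last lia.
  by move=> /(_ ltac:(lia)) /eqP.
by rewrite -block_zero (addnC i t) -drop_drop !cat_take_drop.
Qed.

Lemma block_words_disjoint i i' :
  0 < i < i' -> i' + t <= n -> n <= 3 * t -> [disjoint block_words i & block_words i'].
Proof.
(* If i' <= i + t, block i covers the guard i' - 1 of block i'; otherwise
   n <= 3t forces i < t, and block i covers the guard t - 1 of block i'. *)
move=> ii' i't n3; apply/pred0P => w /=; apply/negP => /andP[wi wi'].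
have [p [pn p_in_i p_guard_i']] : exists p,
    [/\ p < n, i <= p < i + t & ~~ (i' <= p < i' + t) && ((p == i'.-1) || (p == t.-1))].
  by case: (leqP i' (i + t)) => ?; [exists i'.-1 | exists t.-1]; split; lia.
have := block_words_nth pn wi; rewrite /block_constraint p_in_i => /eqP w_p.
have := block_words_nth pn wi'; rewrite /block_constraint.
case/andP: p_guard_i' => /negbTE -> ->.
by rewrite w_p eqxx.
Qed.

Lemma sum_card_block_words_le :
  n <= 3 * t ->
  \sum_(i < n - t) #|block_words i.+1|
    <= #|[set w : n.-tuple 'I_K.+1 | infix (nseq t ord0) w]|.
Proof.
move=> n3.
have disj (i j : 'I_(n - t)) : i != j -> [disjoint block_words i.+1 & block_words j.+1].
  move=> neq_ij; have := ltn_ord i; have := ltn_ord j.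
  case: (ltngtP i j) => [lt_ij|lt_ji|/val_inj eq_ij] ? ?.
  - by apply: block_words_disjoint; lia.
  - by rewrite disjoint_sym; apply: block_words_disjoint; lia.
  - by rewrite eq_ij eqxx in neq_ij.
under eq_bigr do rewrite -sum1_card.
rewrite -(partition_disjoint_bigcup _ _ disj) sum1_card; apply: subset_leq_card.
apply/bigcupsP => i _; apply/subsetP => w wi; rewrite inE.
by apply: (block_words_infix _ wi); have := ltn_ord i; lia.
Qed.

Lemma sum_card_block_words :
  0 < t -> 2 * t <= n ->
  \sum_(i < n - t) #|block_words i.+1|
    = t * (K * K.+1 ^ (n - t - 1)) + (n - 2 * t) * (K ^ 2 * K.+1 ^ (n - t - 2)).
Proof.
move=> t0 n2; rewrite -(big_mkord xpredT (fun i => #|block_words i.+1|)).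
rewrite (big_cat_nat _ (n := t)) //; last lia.
rewrite (eq_big_nat _ _ (F2 := fun=> K * K.+1 ^ (n - t - 1))); last first.
  by move=> i ?; apply: card_block_words_early; lia.
rewrite [X in _ + X = _](eq_big_nat _ _ (F2 := fun=> K ^ 2 * K.+1 ^ (n - t - 2)));
  last first.
  by move=> i ?; apply: card_block_words_late; lia.
by rewrite !sum_nat_const_nat; congr (_ * _ + _ * _); lia.
Qed.

Lemma card_infix_zeros_ge :
  1 < t -> 2 * t <= n <= 3 * t ->
  n * K * K.+1 ^ (n - t - 2) <= #|[set w : n.-tuple 'I_K.+1 | infix (nseq t ord0) w]|.
Proof.
move=> t1 /andP[n2 n3]; apply: leq_trans (sum_card_block_words_le n3).
rewrite sum_card_block_words; [|lia|lia].
rewrite (_ : n - t - 1 = (n - t - 2).+1) ?expnS; last lia.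
move: (K.+1 ^ _) => X.
rewrite (_ : t * _ + _ = (t * K.+1 + (n - 2 * t) * K) * (K * X)); last ring.
rewrite -mulnA leq_mul2r; case: (posnP K) => [->|K0]; first by rewrite mul0n eqxx.
by apply/orP; right; nia.
Qed.

End BlockWords.

Local Open Scope ring_scope.

Lemma subrXX_le (R : realDomainType) (x y : R) n :
  0 <= y <= x -> x ^+ n - y ^+ n <= (x - y) * x ^+ n.-1 *+ n.
Proof.
case/andP=> y0 yx; rewrite subrXX -mulrnAr ler_wpM2l ?subr_ge0 //.
rewrite -[n in _ *+ n](card_ord n) -sumr_const; apply: ler_sum => i _.
have x0 : 0 <= x := le_trans y0 yx.
have -> : x ^+ n.-1 = x ^+ (n.-1 - i) * x ^+ i.
  by rewrite -exprD subnK //; have := ltn_ord i; lia.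
by rewrite ler_wpM2l ?exprn_ge0 // lerXn2r ?nnegrE.
Qed.

Lemma beta_expn_ge K t n : (t.+2 <= n)%N ->
  K.+1%:R ^+ n - (n * K * K.+1 ^ (n - t - 2))%:R <= beta K.+1 t ^+ n.
Proof.
move=> tn; set a : rat := K.+1%:R; set c : rat := K%:R / a ^+ t.+1.
have a_gt0 : 0 < a by rewrite ltr0n.
have at1_neq0 : a ^+ t.+1 != 0 by rewrite expf_neq0 // gt_eqF.
have beta_ac : beta K.+1 t = a - c.
  by rewrite /beta -/a (_ : a - 1 = K%:R) // /a -natr1 addrK.
have c_ge0 : 0 <= c by rewrite /c divr_ge0 // exprn_ge0 // ltW.
have c_le_a : c <= a.
  rewrite ler_pdivrMr ?exprn_gt0 // -exprS /a -natrX ler_nat.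
  by rewrite (leq_trans (leqnSn K)) // -{1}[K.+1]expn1 leq_pexp2l.
have ac_an : (a - (a - c)) * a ^+ n.-1 *+ n = (n * K * K.+1 ^ (n - t - 2))%:R.
  rewrite opprB addrC subrK natrM natrX -/a -mulr_natr.
  rewrite (_ : n.-1 = (n - t - 2 + t.+1)%N) ?exprD; last lia.
  by rewrite /c; field.
rewrite beta_ac lerBlDr -lerBlDl -ac_an; apply: subrXX_le.
by rewrite subr_ge0 c_le_a gerBl c_ge0.
Qed.

Theorem lemma13 (k t n : nat) :
  (2 <= k)%N -> (2 <= t)%N -> (2 * t <= n)%N -> (n <= 3 * t)%N ->
  (((A n (zeros k t))%:R : rat) <= beta k t ^+ n)%R.
Proof.
case: k => [|K] // _ t2 n2 n3.
have count : (A n (zeros K.+1 t) + n * K * K.+1 ^ (n - t - 2) <= K.+1 ^ n)%N.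
  rewrite -(A_add_card_infix n (zeros K.+1 t)) leq_add2l.
  by apply: card_infix_zeros_ge => //; rewrite n2 n3.
apply: le_trans (beta_expn_ge K _); last lia.
by rewrite lerBrDr -natrD -natrX ler_nat.
Qed.
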